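(* If $u,v\in\mathbb{P}^*$ both have increasing/decreasing factorizations, then $u\backsim v$ if and only if $u$ is a rearrangement of $v$.
   Context: $\mathbb{P}^*$ is the set of finite words over the positive integers $\mathbb{P}$ (usual order). For $w=w_1\ldots w_n$, $\mathrm{wt}(w)=t^{n}x^{\sum_i w_i}$. For words $u,w$, $u\le w$ (generalized factor order) if there are $|u|$ consecutive letters of $w$ whose $i$-th letter is $\ge$ the $i$-th letter of $u$ for each $i$. $\mathcal{F}(u)=\{w\in\mathbb{P}^*:u\le w\}$ and $F(u;t,x)=\sum_{w\in\mathcal{F}(u)}\mathrm{wt}(w)$. Two words are Wilf equivalent, $u\backsim v$, iff $F(u;t,x)=F(v;t,x)$. A word $u=u_1\ldots u_n$ has an increasing/decreasing factorization if $u_1\le\cdots\le u_n$ or there is $k<n$ with $u_1\le\cdots\le u_k>u_{k+1}\ge\cdots\ge u_n$. A rearrangement of $u$ is a word obtained by permuting its letters. *)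

From mathcomp Require Import all_boot.
Set Implicit Arguments. Unset Strict Implicit. Unset Printing Implicit Defensive.

(* Words over the positive integers P are modelled as [seq nat] all of whose
   letters are positive. *)
Definition pword (w : seq nat) : bool := all (fun a => 0 < a) w.

Definition gfo (u w : seq nat) : bool :=
  has (fun i => (i + size u <= size w) &&
                all2 leq u (take (size u) (drop i w)))
      (iota 0 (size w).+1).

(* Coefficient of t^n x^m in F(u;t,x) = sum_{w in F(u)} t^|w| x^(sum w):
   the number of positive words w of length n with letter sum m and u <= w.
   Such words have all letters <= m, so they are enumerated as n-tuples
   of elements of 'I_(m.+1). *)
Definition Fcoef (u : seq nat) (n m : nat) : nat :=
  #|[set w : n.-tuple 'I_m.+1 |
       [&& pword (map val w), sumn (map val w) == m & gfo u (map val w)]]|.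

(* Wilf equivalence: F(u;t,x) = F(v;t,x) as formal power series,
   i.e. all coefficients agree. *)
Definition wilf_equiv (u v : seq nat) : Prop :=
  forall n m, Fcoef u n m = Fcoef v n m.

Definition inc_dec_fact (u : seq nat) : Prop :=
  sorted leq u \/
  exists k, [/\ 0 < k, k < size u, sorted leq (take k u),
               nth 0 u k.-1 > nth 0 u k & sorted geq (drop k u)].

(* By inclusion-exclusion over the set P of positions at which u is required
   to occur, the coefficient of t^L x^m in F(u) is an alternating sum of the
   numbers of positive words of length L and sum m that dominate u at every
   position of P.  These are the words lying letterwise above a profile
   determined by u and P, and their number depends only on the total weight of
   that profile.

   When u has an increasing/decreasing factorization, each set {i | u_i > a} is
   an interval, so the weight of the profile for P is L plus the sum over a of
   the number of points covered by the translates by P of an interval of length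
   #{i | u_i > a}.  Hence F(u) depends only on the multiset of letters of u.

   Conversely, Wilf-equivalent words have the same length n and the same letter
   sum.  If u and v are not rearrangements of each other, let e be least such
   that min(#{i | u_i > a}, e) differs from the corresponding count for v for
   some a.  For words of length n + e and position sets P in [0, e], the profile
   weights of u and v agree except at P = {0, e}; taking m to be the smaller of
   the two weights at {0, e}, exactly one inclusion-exclusion term differs, so
   the coefficients of t^(n+e) x^m differ. *)

From mathcomp Require Import all_boot all_order all_algebra zify.
Import GRing.Theory Num.Theory.

Set Implicit Arguments. Unset Strict Implicit. Unset Printing Implicit Defensive.

Lemma leq_mem_sumn (s : seq nat) x : x \in s -> x <= sumn s.
Proof.
elim: s => [|y s IH] //=; rewrite inE => /orP[/eqP->|/IH]; first exact: leq_addr.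
by move/leq_trans; apply; apply: leq_addl.
Qed.

Lemma leq_sumn_all2 (s t : seq nat) : all2 leq s t -> sumn s <= sumn t.
Proof. by elim: s t => [|a s IH] [|b t] //= /andP[ab st]; apply: leq_add (IH _ st). Qed.

Definition nabove (s : seq nat) a := count (fun x => a < x) s.

Lemma nabove_size s a : nabove s a <= size s.
Proof. exact: count_size. Qed.

Lemma nabove_monotone s a b : a <= b -> nabove s b <= nabove s a.
Proof. by move=> ab; apply: sub_count => x /=; apply: leq_ltn_trans. Qed.

Lemma nabove0 s : pword s -> nabove s 0 = size s.
Proof. by move=> ps; apply/eqP; rewrite -all_count. Qed.

Lemma nabove_bound s K a : (forall x, x \in s -> x <= K) -> K <= a -> nabove s a = 0.
Proof.
move=> sK Ka; apply/eqP; rewrite -leqn0 leqNgt -has_count.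
by apply/hasP => -[x /sK xK]; lia.
Qed.

Lemma sum_ltn_layer x K : \sum_(1 <= a < K) (a < x : nat) = minn x K - 1.
Proof.
elim: K => [|K IH]; first by rewrite big_geq.
case: K IH => [|K] IH; first by rewrite big_geq //; lia.
by rewrite big_nat_recr //= IH; lia.
Qed.

Lemma maxn1_layer x K : x <= K -> maxn 1 x = 1 + \sum_(1 <= a < K) (a < x : nat).
Proof. by rewrite sum_ltn_layer; lia. Qed.

Lemma sumn_layer (s : seq nat) K : pword s -> (forall x, x \in s -> x <= K) ->
  sumn s = size s + \sum_(1 <= a < K) nabove s a.
Proof.
elim: s => [|x s IH] /=; first by rewrite big1.
case/andP => x_gt0 ps sK.
rewrite (eq_bigr (fun a => (a < x : nat) + nabove s a)) // big_split /= sum_ltn_layer.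
rewrite (IH ps) => [|y ys]; last by apply: sK; rewrite inE ys orbT.
by have := sK x (mem_head x s); lia.
Qed.

Lemma count_mem_nabove (s : seq nat) x : 0 < x ->
  nabove s x.-1 = count_mem x s + nabove s x.
Proof.
move=> x_gt0; elim: s => [|y s IH] //=; rewrite /nabove /= -!/(nabove _ _) IH.
by case: (ltngtP y x) => [lt|gt|->]; rewrite ?eqxx //=; lia.
Qed.

Lemma perm_eq_nabove u v : pword u -> pword v ->
  (forall a, nabove u a = nabove v a) -> perm_eq u v.
Proof.
move=> pos_u pos_v eq_above; apply/allP => x _ /=; apply/eqP.
have [->|x_gt0] := posnP x.
  have no0 s : pword s -> count_mem 0 s = 0.
    move=> pos_s; apply/eqP; rewrite -leqn0 leqNgt -has_count.
    by apply/hasP => -[y /(allP pos_s) /= y_gt0 /eqP y0]; lia.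
  by rewrite !no0.
by have := count_mem_nabove u x_gt0; rewrite !eq_above count_mem_nabove // => /addIn.
Qed.

Lemma sum_ord_count (b : pred nat) n : \sum_(i < n) (b i : nat) = count b (iota 0 n).
Proof.
by rewrite -sumn_count sumnE big_map -(big_mkord xpredT (fun i => b i : nat)) /index_iota subn0.
Qed.

Lemma ltn_sum_nat (F G : nat -> nat) lo hi a0 :
  (forall a, lo <= a < hi -> F a <= G a) -> lo <= a0 < hi -> F a0 < G a0 ->
  \sum_(lo <= a < hi) F a < \sum_(lo <= a < hi) G a.
Proof.
move=> leFG /andP[lo_a0 a0_hi] ltFG.
rewrite (big_cat_nat lo_a0 (ltnW a0_hi)) [X in _ < X](big_cat_nat lo_a0 (ltnW a0_hi)) /=.
rewrite (big_ltn a0_hi) [in X in _ < X](big_ltn a0_hi).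
have le_range m k : lo <= m -> k <= hi ->
    \sum_(m <= a < k) F a <= \sum_(m <= a < k) G a.
  move=> lo_m k_hi; rewrite big_nat_cond [X in _ <= X]big_nat_cond.
  by apply: leq_sum => a /andP[/andP[ma ak] _]; apply: leFG; lia.
have := le_range lo a0 (leqnn lo) (ltnW a0_hi).
have := le_range a0.+1 hi (leqW lo_a0) (leqnn hi); lia.
Qed.

Section DominatingWords.
Variables (L m : nat).

Definition dom_words (r : nat -> nat) : {set L.-tuple 'I_m.+1} :=
  [set w : L.-tuple 'I_m.+1 |
     (sumn (map val w) == m) && [forall q : 'I_L, r q <= nth 0 (map val w) q]].

Lemma nth_map_val (w : L.-tuple 'I_m.+1) (q : 'I_L) : nth 0 (map val w) q = tnth w q.
Proof. by rewrite (nth_map ord0) ?size_tuple // -tnth_nth. Qed.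

Lemma sumn_map_val (w : L.-tuple 'I_m.+1) : sumn (map val w) = \sum_(q < L) tnth w q.
Proof. by rewrite sumnE big_map big_tuple. Qed.

Lemma leq_term_sum (F : 'I_L -> nat) (q : 'I_L) : F q <= \sum_i F i.
Proof. by rewrite (bigD1 q) //= leq_addr. Qed.

(* Subtracting [r1] and adding [r2] letterwise is injective on [dom_words r1]
   and preserves the letter sum. *)
Lemma card_dom_words_le (r1 r2 : nat -> nat) :
  \sum_(q < L) r1 q = \sum_(q < L) r2 q -> #|dom_words r1| <= #|dom_words r2|.
Proof.
move=> eq_sum.
pose shift (w : L.-tuple 'I_m.+1) : L.-tuple 'I_m.+1 :=
  [tuple (inord (tnth w q - r1 q + r2 q) : 'I_m.+1) | q < L].
have shiftP w : w \in dom_words r1 -> [/\ forall q : 'I_L, r1 q <= tnth w q,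
    forall q : 'I_L, tnth w q - r1 q + r2 q <= m &
    \sum_(q < L) (tnth w q - r1 q + r2 q) = m].
  rewrite inE sumn_map_val => /andP[/eqP sum_w /forallP dom_w].
  have le_r1 (q : 'I_L) : r1 q <= tnth w q by rewrite -nth_map_val.
  have sum_shift : \sum_(q < L) (tnth w q - r1 q + r2 q) = m.
    rewrite big_split /= -eq_sum -big_split /= -[RHS]sum_w.
    by apply: eq_bigr => q _; rewrite subnK.
  by split=> // q; apply: (leq_trans _ (eq_leq sum_shift)); apply: leq_term_sum.
rewrite -(card_in_imset (f := shift)); last first.
  move=> w1 w2 /shiftP[le1 bd1 _] /shiftP[le2 bd2 _] eq_shift.
  apply: eq_from_tnth => q; apply: val_inj.
  have := congr1 (fun t => val (tnth t q)) eq_shift.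
  rewrite /= !tnth_mktuple !inordK ?ltnS ?bd1 ?bd2 // => /addIn.
  by move/(congr1 (addn^~ (r1 q))); rewrite !subnK.
apply: subset_leq_card; apply/subsetP => _ /imsetP[w /shiftP[_ bd sum_shift] ->].
rewrite inE sumn_map_val; apply/andP; split.
  apply/eqP; rewrite -[RHS]sum_shift; apply: eq_bigr => q _.
  by rewrite tnth_mktuple inordK // ltnS.
by apply/forallP => q; rewrite nth_map_val tnth_mktuple inordK ?ltnS // leq_addl.
Qed.

Lemma card_dom_words_eq (r1 r2 : nat -> nat) :
  \sum_(q < L) r1 q = \sum_(q < L) r2 q -> #|dom_words r1| = #|dom_words r2|.
Proof. by move=> eq_sum; apply/eqP; rewrite eqn_leq !card_dom_words_le. Qed.

Lemma card_dom_words0 (r : nat -> nat) : m < \sum_(q < L) r q -> #|dom_words r| = 0.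
Proof.
move=> lt_m; apply: eq_card0 => w; rewrite inE sumn_map_val.
apply/negP => /andP[/eqP sum_w /forallP dom_w].
have : \sum_(q < L) r q <= \sum_(q < L) tnth w q.
  by apply: leq_sum => q _; rewrite -nth_map_val.
by rewrite sum_w leqNgt lt_m.
Qed.

Lemma card_dom_words_gt0 (r : nat -> nat) : \sum_(q < L) r q = m -> 0 < #|dom_words r|.
Proof.
move=> sum_r.
have le_r (q : 'I_L) : r q <= m by apply: (leq_trans _ (eq_leq sum_r)); apply: leq_term_sum.
apply/card_gt0P; exists [tuple (inord (r q) : 'I_m.+1) | q < L].
rewrite inE sumn_map_val; apply/andP; split.
  apply/eqP; rewrite -[RHS]sum_r; apply: eq_bigr => q _.
  by rewrite tnth_mktuple inordK // ltnS.
by apply/forallP => q; rewrite nth_map_val tnth_mktuple inordK // ltnS.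
Qed.

End DominatingWords.

Definition occurs_at (u s : seq nat) (p : nat) : bool :=
  (p + size u <= size s) && all2 leq u (take (size u) (drop p s)).

Lemma gfo_occurs_at u s N : size s = N -> gfo u s = [exists p : 'I_N.+1, occurs_at u s p].
Proof.
move=> <-; apply/hasP/existsP => [[i]|[p occ_p]].
  by rewrite mem_iota add0n => lt_i occ_i; exists (Ordinal lt_i).
by exists (val p) => //; rewrite mem_iota add0n ltn_ord.
Qed.

Lemma all2_leqP (s t : seq nat) : size s = size t ->
  reflect (forall j, j < size s -> nth 0 s j <= nth 0 t j) (all2 leq s t).
Proof.
elim: s t => [|a s IH] [|b t] //= eq_size; first by constructor.
have [ab /=|ba] := leqP a b; last by constructor => /(_ 0 isT) /=; lia.
apply: (iffP (IH t (succn_inj eq_size))) => [le_st [|j] //= /le_st | le_st j /(le_st j.+1)] //.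
Qed.

Lemma occurs_atP u s p : reflect (p + size u <= size s /\
    forall j, j < size u -> nth 0 u j <= nth 0 s (p + j)) (occurs_at u s p).
Proof.
rewrite /occurs_at; have [fit /=|] := boolP (p + size u <= size s); last by constructor; case.
have eq_size : size u = size (take (size u) (drop p s)).
  by rewrite size_take size_drop; case: ltnP => //; lia.
apply: (iffP (all2_leqP eq_size)) => [le_u|[_ le_u] j lt_j].
  by split=> // j lt_j; have := le_u j lt_j; rewrite nth_take // nth_drop.
by rewrite nth_take // nth_drop; apply: le_u.
Qed.

Section InclusionExclusion.
Variables (T I : finType) (A : pred T).
Local Open Scope ring_scope.

Definition card_forall_in (D : T -> I -> bool) (P : {set I}) :=
  #|[set w | A w && [forall i in P, D w i]]|%N.

Lemma card_set_sum (Q : pred T) : (#|[set w | Q w]|%:R : int) = \sum_w ((Q w)%:R : int).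
Proof.
rewrite -sum1_card natr_sum big_mkcond /=; apply: eq_bigr => w _.
by rewrite inE; case: (Q w).
Qed.

Lemma indicator_forall_in (D : T -> I -> bool) w (J : {set I}) :
  \prod_i (if i \in J then - ((D w i)%:R : int) else 1) =
  (-1) ^+ #|J| * ([forall i in J, D w i])%:R.
Proof.
rewrite -big_mkcond /= prodrN; congr (_ * _).
have [all_D|/forall_inPn[i iJ /negbTE not_D]] := boolP [forall i in J, D w i].
  by rewrite big1 // => i /(forall_inP all_D) ->.
by rewrite (bigD1 i iJ) /= not_D mul0r.
Qed.

Lemma indicator_exists (D : T -> I -> bool) w :
  1 - (([exists i, D w i])%:R : int) = \prod_i (- ((D w i)%:R) + 1).
Proof.
have [/existsP[i D_i]|/existsPn no_D] := boolP [exists i, D w i].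
  by rewrite (bigD1 i) //= D_i subrr addNr mul0r.
by rewrite subr0 big1 // => i _; rewrite (negbTE (no_D i)) oppr0 add0r.
Qed.

Lemma card_exists_incl_excl (D : T -> I -> bool) :
  (#|[set w | A w]|%:R : int) - (#|[set w | A w && [exists i, D w i]]|%:R)
  = \sum_(P : {set I}) (-1) ^+ #|P| * (card_forall_in D P)%:R.
Proof.
rewrite !card_set_sum -sumrB.
transitivity (\sum_w (A w)%:R * (1 - (([exists i, D w i])%:R : int))).
  by apply: eq_bigr => w _; case: (A w); rewrite ?mul1r ?mul0r ?subrr.
under eq_bigr => w _ do rewrite indicator_exists bigA_distr mulr_sumr.
rewrite exchange_big /=; apply: eq_bigr => P _.
rewrite /card_forall_in card_set_sum mulr_sumr; apply: eq_bigr => w _.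
rewrite indicator_forall_in mulrCA; congr (_ * _).
by case: (A w); rewrite ?mul1r ?mul0r.
Qed.

Lemma card_exists_eq (D1 D2 : T -> I -> bool) :
  (forall P, card_forall_in D1 P = card_forall_in D2 P) ->
  #|[set w | A w && [exists i, D1 w i]]|%N = #|[set w | A w && [exists i, D2 w i]]|%N.
Proof.
move=> eq_all.
have : \sum_(P : {set I}) (-1) ^+ #|P| * ((card_forall_in D1 P)%:R : int) =
       \sum_(P : {set I}) (-1) ^+ #|P| * (card_forall_in D2 P)%:R.
  by apply: eq_bigr => P _; rewrite eq_all.
rewrite -!card_exists_incl_excl => /addrI /oppr_inj /eqP.
by rewrite eqr_nat => /eqP.
Qed.

Lemma card_exists_neq (D1 D2 : T -> I -> bool) (P0 : {set I}) :
  card_forall_in D1 P0 <> card_forall_in D2 P0 ->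
  (forall P, P != P0 -> card_forall_in D1 P = card_forall_in D2 P) ->
  #|[set w | A w && [exists i, D1 w i]]|%N <> #|[set w | A w && [exists i, D2 w i]]|%N.
Proof.
move=> ne_P0 eq_others eq_exists.
have := card_exists_incl_excl D1; rewrite eq_exists card_exists_incl_excl.
move/eqP; rewrite eq_sym -subr_eq0 -sumrB (bigD1 P0) //= big1 ?addr0.
  by rewrite -mulrBr mulf_eq0 signr_eq0 subr_eq0 eqr_nat => /eqP.
by move=> P /eq_others ->; rewrite subrr.
Qed.

End InclusionExclusion.

Section Occurrences.
Variables (L m : nat).
Implicit Types (u : seq nat) (P : {set 'I_L.+1}).

Definition pos_words_of_sum (w : L.-tuple 'I_m.+1) :=
  pword (map val w) && (sumn (map val w) == m).

Definition occ u (w : L.-tuple 'I_m.+1) (p : 'I_L.+1) := occurs_at u (map val w) p.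

Lemma FcoefE u : Fcoef u L m = #|[set w | pos_words_of_sum w && [exists p, occ u w p]]|.
Proof.
apply: eq_card => w; rewrite !inE /pos_words_of_sum /occ -andbA.
by rewrite (gfo_occurs_at _ (N := L)) // size_map size_tuple.
Qed.

Definition cover_max u P q :=
  \max_(p in P | (p <= q) && (q < p + size u)) nth 0 u (q - p).

Definition weight u P := \sum_(q < L) maxn 1 (cover_max u P q).

Lemma card_occ_all_oversize u P p : p \in P -> L < p + size u ->
  card_forall_in pos_words_of_sum (occ u) P = 0.
Proof.
move=> pP lt_L; apply: eq_card0 => w; rewrite inE.
apply/negP => /andP[_ /forall_inP /(_ p pP) /occurs_atP[]].
by rewrite size_map size_tuple; lia.
Qed.

Lemma card_occ_all u P : (forall p, p \in P -> p + size u <= L) ->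
  card_forall_in pos_words_of_sum (occ u) P =
  #|dom_words L m (fun q => maxn 1 (cover_max u P q))|.
Proof.
move=> fit; apply: eq_card => w; rewrite !inE /pos_words_of_sum.
have size_w : size (map val w) = L by rewrite size_map size_tuple.
apply/andP/andP => [[/andP[pos_w sum_w] occ_w]|[sum_w dom_w]].
  split=> //; apply/forallP => q; rewrite geq_max; apply/andP; split.
    by apply: (all_nthP 0 pos_w); rewrite size_w.
  apply/bigmax_leqP => p /andP[pP /andP[le_pq lt_q]].
  have /occurs_atP[_ le_u] := forall_inP occ_w p pP.
  by have := le_u (q - p); rewrite subnKC //; apply; lia.
split.
  rewrite sum_w andbT; apply/(all_nthP 0) => i; rewrite size_w => lt_i.
  by have := forallP dom_w (Ordinal lt_i); rewrite geq_max => /andP[].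
apply/forall_inP => p pP; apply/occurs_atP.
split=> [|j lt_j]; first by rewrite size_w fit.
have lt_L : p + j < L by have := fit p pP; lia.
have := forallP dom_w (Ordinal lt_L); rewrite geq_max => /andP[_]; apply: leq_trans.
rewrite /= -{1}(addKn p j); apply: (leq_bigmax_cond p); rewrite pP leq_addr /=; lia.
Qed.

Lemma card_occ_all_eq u v P : size u = size v ->
  ((forall p, p \in P -> p + size u <= L) -> weight u P = weight v P) ->
  card_forall_in pos_words_of_sum (occ u) P = card_forall_in pos_words_of_sum (occ v) P.
Proof.
move=> eq_size eq_weight.
have [/exists_inP[p pP lt_L]|/exists_inPn fit] := boolP [exists p in P, L < p + size u].
  by rewrite !(card_occ_all_oversize pP) -?eq_size.
have {}fit p : p \in P -> p + size u <= L by move/fit; rewrite -leqNgt.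
rewrite !card_occ_all -?eq_size //; exact/card_dom_words_eq/eq_weight.
Qed.

End Occurrences.

Lemma convex_pred_interval (F : pred nat) n :
  (forall i j k, i <= j -> j <= k -> k < n -> F i -> F k -> F j) ->
  exists2 s, s + count F (iota 0 n) <= n &
    forall j, (j < n) && F j = (s <= j < s + count F (iota 0 n)).
Proof.
elim: n => [|n IH] convF; first by exists 0 => // j; lia.
have [|s le_sn inF] := IH; first by move=> i j k ij jk kn; apply: convF ij jk _; lia.
rewrite -addn1 iotaD count_cat /= add0n addn0.
set c := count F (iota 0 n) in le_sn inF *.
have inFn j : j < n -> F j = (s <= j < s + c) by move=> lt_jn; rewrite -inF lt_jn.
suff [s' [fit below at_n]] : exists s', [/\ s' + (c + F n) <= n.+1,
    forall j, j < n -> F j = (s' <= j < s' + (c + F n)) & F n = (s' <= n < s' + (c + F n))].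
  exists s' => [|j]; first by rewrite addn1.
  have [lt_jn|le_nj] := ltnP j n; first by rewrite below //; lia.
  by have [->|ne_jn] := eqVneq j n; [rewrite -at_n | ]; lia.
have [Fn|nFn] := boolP (F n); last first.
  by exists s; split=> [|j lt_jn|]; rewrite ?inFn //; lia.
have [c0|c_gt0] := posnP c.
  by exists n; split=> [|j lt_jn|]; rewrite ?inFn //; lia.
have Fs : F s by have := inF s; lia.
have Fn1 : F n.-1 by apply: (convF s n.-1 n) => //; have := inF s; lia.
have := inF n.-1; rewrite Fn1 => last_in.
by exists s; split=> [|j lt_jn|]; rewrite ?inFn //; lia.
Qed.

Lemma inc_dec_fact_unimodal u i j k : inc_dec_fact u -> i <= j -> j <= k -> k < size u ->
  minn (nth 0 u i) (nth 0 u k) <= nth 0 u j.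
Proof.
move=> [sorted_u | [k0 [k0_gt0 k0_size inc_u _ dec_u]]] ij jk k_size.
  rewrite geq_min; apply/orP; left.
  by apply: (sorted_leq_nth leq_trans leqnn 0 sorted_u) => //; rewrite inE /=; lia.
have [lt_jk0|le_k0j] := ltnP j k0.
  rewrite geq_min; apply/orP; left.
  have size_take_k0 : size (take k0 u) = k0 by rewrite size_take k0_size.
  rewrite -(nth_take 0 (leq_ltn_trans ij lt_jk0)) -(nth_take 0 lt_jk0).
  by apply: (sorted_leq_nth leq_trans leqnn 0 inc_u); rewrite ?inE /= ?size_take_k0; lia.
rewrite geq_min; apply/orP; right.
have le_k0k : k0 <= k by apply: leq_trans jk.
rewrite -(subnKC le_k0j) -(subnKC le_k0k) -!nth_drop.
apply: (sorted_leq_nth (fun _ _ _ h1 h2 => leq_trans h2 h1) leqnn 0 dec_u);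
  rewrite ?inE ?size_drop; lia.
Qed.

Lemma inc_dec_nabove_interval u a : inc_dec_fact u ->
  exists2 s, s + nabove u a <= size u &
    forall j, (j < size u) && (a < nth 0 u j) = (s <= j < s + nabove u a).
Proof.
move=> inc_u.
have -> : nabove u a = count (fun j => a < nth 0 u j) (iota 0 (size u)).
  by rewrite /nabove -{1}(mkseq_nth 0 u) /mkseq count_map.
apply: convex_pred_interval => i j k ij jk k_size ai ak.
apply: leq_trans (inc_dec_fact_unimodal inc_u ij jk k_size).
by rewrite leq_min ai ak.
Qed.

Section Coverage.
Variable L : nat.
Implicit Types P : {set 'I_L.+1}.

Definition covered P c q := [exists p in P, (p <= q) && (q < p + c)].
Definition ncovered P c := count (covered P c) (iota 0 L).

Lemma ncovered0 c : ncovered set0 c = 0.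
Proof.
rewrite /ncovered (eq_count (a2 := pred0)) ?count_pred0 // => q /=.
by apply/exists_inP => -[p]; rewrite inE.
Qed.

Lemma ncovered_shift P s c : (forall p, p \in P -> p + s + c <= L) ->
  count (fun q => [exists p in P, (p + s <= q) && (q < p + s + c)]) (iota 0 L) =
  ncovered P c.
Proof.
move=> fit; rewrite /ncovered.
have [le_sL|lt_Ls] := leqP s L; last first.
  have -> : P = set0 by apply/setP => p; rewrite inE; apply/negP => /fit; lia.
  rewrite (eq_count (a2 := pred0)) ?count_pred0 -/(ncovered _ _) ?ncovered0 // => q /=.
  by apply/exists_inP => -[p]; rewrite inE.
have split_at k : k <= L -> iota 0 L = iota 0 k ++ iota k (L - k).
  by move=> le_kL; rewrite -iotaD subnKC.
rewrite {1}(split_at s le_sL) (split_at (L - s)) ?leq_subr // !count_cat subKn //.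
rewrite (eq_in_count (a2 := pred0) (s := iota 0 s)) ?count_pred0 => [|q]; last first.
  by rewrite mem_iota => lt_qs; apply/exists_inP => -[p _]; lia.
rewrite [count _ (iota (L - s) s)](eq_in_count (a2 := pred0)) ?count_pred0 => [|q]; last first.
  by rewrite mem_iota => lt_q; apply/exists_inP => -[p /fit]; lia.
rewrite add0n addn0 -[s in iota s _]addn0 iotaDl count_map.
by apply: eq_count => q /=; apply: eq_existsb => p; lia.
Qed.

End Coverage.

Lemma cover_max_gt L u (P : {set 'I_L.+1}) q a : (a < cover_max u P q) =
  [exists p in P, [&& p <= q, q < p + size u & a < nth 0 u (q - p)]].
Proof.
apply/idP/idP => [lt_a|/exists_inP[p pP /and3P[le_pq lt_q lt_a]]]; last first.
  by apply: leq_trans lt_a _; apply: (leq_bigmax_cond p); rewrite pP le_pq.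
apply: contraLR lt_a => /exists_inPn none; rewrite -leqNgt.
apply/bigmax_leqP => p /andP[pP /andP[le_pq lt_q]].
by have := none p pP; rewrite le_pq lt_q -leqNgt.
Qed.

Section Layers.
Variables (L : nat) (u : seq nat) (P : {set 'I_L.+1}).
Hypotheses (inc_u : inc_dec_fact u) (fit : forall p, p \in P -> p + size u <= L).

(* The positions where [u] exceeds [a] form an interval of length [nabove u a],
   so the positions where [cover_max] exceeds [a] are covered by the translates
   of that interval. *)
Lemma count_cover_max_gt a :
  count (fun q => a < cover_max u P q) (iota 0 L) = ncovered P (nabove u a).
Proof.
have [s le_s interval] := inc_dec_nabove_interval a inc_u.
rewrite -(ncovered_shift (s := s)) => [|p /fit]; last lia.
apply: eq_count => q; rewrite cover_max_gt; apply: eq_existsb => p /=.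
have [le_pq|lt_qp] := leqP p q; last lia.
by have := interval (q - p); move: (p \in P) (a < nth 0 u (q - p)) => pP lt_a; lia.
Qed.

Lemma weight_layer K : (forall x, x \in u -> x <= K) ->
  weight u P = L + \sum_(1 <= a < K) ncovered P (nabove u a).
Proof.
move=> bound.
have le_K q : cover_max u P q <= K.
  apply/bigmax_leqP => p _; have [lt_q|le_q] := ltnP (q - p) (size u).
    exact/bound/mem_nth.
  by rewrite nth_default.
rewrite /weight (eq_bigr _ (fun (q : 'I_L) _ => maxn1_layer (le_K q))) big_split /=.
rewrite sum_nat_const card_ord muln1; congr (_ + _).
rewrite exchange_big /=; apply: eq_bigr => a _.
by rewrite (sum_ord_count (fun q => a < cover_max u P q)) count_cover_max_gt.
Qed.

End Layers.

Lemma perm_wilf_equiv u v : inc_dec_fact u -> inc_dec_fact v -> perm_eq u v ->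
  wilf_equiv u v.
Proof.
move=> inc_u inc_v uv L m; rewrite !FcoefE; apply: card_exists_eq => P.
have eq_size := perm_size uv.
apply: card_occ_all_eq => // fit.
have fit_v p : p \in P -> p + size v <= L by rewrite -eq_size; apply: fit.
have bound_v x : x \in v -> x <= sumn u by rewrite (perm_sumn uv) => /leq_mem_sumn.
rewrite (weight_layer inc_u fit (@leq_mem_sumn u)) (weight_layer inc_v fit_v bound_v).
by congr (_ + _); apply: eq_bigr => a _; rewrite /nabove (permP uv).
Qed.

Lemma Fcoef_size_lt u L m : L < size u -> Fcoef u L m = 0.
Proof.
move=> lt_L; apply: eq_card0 => w.
rewrite inE (gfo_occurs_at _ (N := L)) ?size_map ?size_tuple //.
apply/negP => /and3P[_ _ /existsP[p /occurs_atP[fit _]]].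
by move: fit; rewrite size_map size_tuple; lia.
Qed.

Lemma Fcoef_self_gt0 u : pword u -> 0 < Fcoef u (size u) (sumn u).
Proof.
move=> pos_u.
pose w : (size u).-tuple 'I_(sumn u).+1 :=
  [tuple (inord (nth 0 u i) : 'I_(sumn u).+1) | i < size u].
have val_w : map val w = u.
  apply: (@eq_from_nth _ 0) => [|i]; rewrite size_map size_tuple // => lt_i.
  rewrite (nth_map_val w (Ordinal lt_i)) tnth_mktuple inordK // ltnS.
  exact/leq_mem_sumn/mem_nth.
apply/card_gt0P; exists w; rewrite inE val_w pos_u eqxx /=.
rewrite (gfo_occurs_at _ (N := size u)) //; apply/existsP; exists ord0.
by apply/occurs_atP.
Qed.

Lemma Fcoef_sumn_lt u m : m < sumn u -> Fcoef u (size u) m = 0.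
Proof.
move=> lt_m; apply: eq_card0 => w.
have size_w : size (map val w) = size u by rewrite size_map size_tuple.
rewrite inE (gfo_occurs_at _ (N := size u)) //.
apply/negP => /and3P[_ /eqP sum_w /existsP[p /andP[fit /leq_sumn_all2]]].
have p0 : nat_of_ord p = 0 by move: fit; rewrite size_w; lia.
by rewrite p0 drop0 take_oversize ?size_w // sum_w; lia.
Qed.

Lemma wilf_equiv_size u v : pword u -> pword v -> wilf_equiv u v -> size u = size v.
Proof.
move=> pos_u pos_v W; apply/eqP; rewrite eqn_leq.
apply/andP; split; rewrite leqNgt; apply/negP => lt_size.
  by have := Fcoef_self_gt0 pos_v; rewrite -W Fcoef_size_lt.
by have := Fcoef_self_gt0 pos_u; rewrite W Fcoef_size_lt.
Qed.

Lemma wilf_equiv_sumn u v : pword u -> pword v -> size u = size v -> wilf_equiv u v ->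
  sumn u = sumn v.
Proof.
move=> pos_u pos_v eq_size W; apply/eqP; rewrite eqn_leq.
apply/andP; split; rewrite leqNgt; apply/negP => lt_sum.
  by have := Fcoef_self_gt0 pos_v; rewrite -W -eq_size Fcoef_sumn_lt.
by have := Fcoef_self_gt0 pos_u; rewrite W eq_size Fcoef_sumn_lt.
Qed.

Section Gaps.
Variable L : nat.
Implicit Types P : {set 'I_L.+1}.

Definition max_pos P := \max_(p in P) (p : nat).

Lemma max_pos_in P : P != set0 -> exists2 p, p \in P & (p : nat) = max_pos P.
Proof.
by rewrite -card_gt0 => /(eq_bigmax_cond (fun p : 'I_L.+1 => (p : nat)))[p]; exists p.
Qed.

Lemma leq_max_pos P p : p \in P -> p <= max_pos P.
Proof. exact: (leq_bigmax_cond (F := fun p : 'I_L.+1 => (p : nat))). Qed.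

Definition covers_gaps P g := forall x, (exists2 p, p \in P & p <= x) -> x < max_pos P ->
  exists2 p, p \in P & (p <= x) && (x < p + g).

(* Once [c] exceeds the gaps, lengthening the intervals by one only adds the
   position right after the last interval. *)
Lemma ncovered_step P g c : P != set0 -> covers_gaps P g -> g <= c ->
  max_pos P + c < L -> ncovered P c.+1 = (ncovered P c).+1.
Proof.
move=> P_ne0 gaps le_gc lt_L.
have [pM pM_P pM_max] := max_pos_in P_ne0.
have not_last : ~~ covered P c (max_pos P + c).
  by apply/exists_inP => -[p /leq_max_pos]; lia.
have coverS : covered P c.+1 =1 predU (covered P c) (pred1 (max_pos P + c)).
  move=> q /=; apply/exists_inP/orP => [[p pP /andP[le_pq lt_q]]|].
    have [lt_qc|le_cq] := ltnP q (p + c); first by left; apply/exists_inP; exists p => //; lia.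
    have [->|ne_q] := eqVneq q (max_pos P + c); [by right | left].
    have [lt_qM|le_Mq] := ltnP q (max_pos P).
      have [p' p'P /andP[le_p'q lt_q']] := gaps q (ex_intro2 _ _ p pP le_pq) lt_qM.
      by apply/exists_inP; exists p' => //; lia.
    by apply/exists_inP; exists pM => //; have := leq_max_pos pP; lia.
  by case=> [/exists_inP[p pP cov_q]|/eqP->]; [exists p | exists pM] => //; lia.
have last_in : max_pos P + c \in iota 0 L by rewrite mem_iota; lia.
rewrite /ncovered (eq_count coverS).
have := count_predUI (covered P c) (pred1 (max_pos P + c)) (iota 0 L).
rewrite (eq_count (a1 := predI _ _) (a2 := pred0)) ?count_pred0 => [|q /=]; last first.
  by apply/andP => -[cov_q /eqP q_last]; rewrite q_last (negbTE not_last) in cov_q.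
by rewrite count_uniq_mem ?iota_uniq // last_in; lia.
Qed.

Lemma ncovered_truncate P g c : P != set0 -> covers_gaps P g -> max_pos P + c <= L ->
  ncovered P c = ncovered P (minn c g) + (c - minn c g).
Proof.
move=> P_ne0 gaps le_L.
have [le_cg|lt_gc] := leqP c g; first by rewrite subnn addn0.
have [k c_eq] : exists k, c = g + k by exists (c - g); lia.
subst c; rewrite addKn.
elim: k le_L {lt_gc} => [|k IH] le_L; first by rewrite !addn0.
by rewrite addnS (ncovered_step P_ne0 gaps) ?IH; lia.
Qed.

End Gaps.

Lemma count_iota_between a b L : count (fun q => a <= q < b) (iota 0 L) = minn b L - a.
Proof.
elim: L => [|L IH]; first by rewrite minn0.
by rewrite -addn1 iotaD count_cat IH /= add0n; lia.
Qed.

Section Endpoints.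
Variables n e : nat.

Definition endpoints : {set 'I_(n + e).+1} := [set ord0; inord e].

Lemma mem_endpoints (p : 'I_(n + e).+1) :
  (p \in endpoints) = (p == 0 :> nat) || (p == e :> nat).
Proof. by rewrite !inE -!val_eqE /= inordK // ltnS leq_addl. Qed.

Lemma endpoints_le p : p \in endpoints -> p <= e.
Proof. by rewrite mem_endpoints; lia. Qed.

Lemma ncovered_endpoints c : c <= n -> ncovered endpoints c = c + minn c e.
Proof.
move=> le_cn.
have coverE : covered endpoints c =1 predU (fun q => 0 <= q < c) (fun q => e <= q < e + c).
  move=> q /=; apply/exists_inP/idP => [[p]|]; first by rewrite mem_endpoints; lia.
  case/orP => [lt_qc|/andP[le_eq lt_q]]; [exists ord0 | exists (inord e)];
    rewrite ?mem_endpoints /= ?inordK ?ltnS ?leq_addl //; lia.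
rewrite /ncovered (eq_count coverE).
have := count_predUI (fun q => 0 <= q < c) (fun q => e <= q < e + c) (iota 0 (n + e)).
rewrite (eq_count (a1 := predI _ _) (a2 := fun q => e <= q < c)) => [|q /=]; last lia.
by rewrite !count_iota_between; lia.
Qed.

End Endpoints.

(* Among nonempty subsets of [[0, e]], only [{0, e}] leaves the point [e - 1]
   uncovered by intervals of length [e - 1]. *)
Lemma covers_gaps_sub n e (P : {set 'I_(n + e).+1}) : 0 < e ->
  (forall p, p \in P -> p <= e) -> P != set0 -> P != endpoints n e -> covers_gaps P e.-1.
Proof.
move=> e_gt0 le_e P_ne0 P_ne x [p1 p1P le_p1x] lt_xM.
have [/exists_inP[p pP cov]|/exists_inPn uncov] :=
  boolP [exists p in P, (p <= x) && (x < p + e.-1)]; first by exists p.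
case/negP: P_ne; apply/eqP/setP => y.
have [pM pMP pM_max] := max_pos_in P_ne0.
have le_Me : max_pos P <= e by rewrite -pM_max le_e.
have := uncov p1 p1P; rewrite le_p1x /= -leqNgt => le_x.
rewrite mem_endpoints; apply/idP/idP => [yP|].
  by have := le_e y yP; have := uncov y yP; lia.
case/orP => /eqP y_val; [rewrite (_ : y = p1) // | rewrite (_ : y = pM) //];
  apply: ord_inj; lia.
Qed.

Lemma sum_threshold_lt (f g : nat -> nat) e K a0 :
  (forall a b, a <= b -> f b <= f a) -> (forall a b, a <= b -> g b <= g a) ->
  1 <= a0 < K -> g a0 < e <= f a0 ->
  \sum_(1 <= a < K) (e <= g a : nat) < \sum_(1 <= a < K) (e <= f a : nat).
Proof.
move=> anti_f anti_g range_a0 /andP[lt_g le_f].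
apply: (ltn_sum_nat _ range_a0); last lia.
move=> a _; have [le_a|lt_a] := leqP a a0; first by have := anti_f _ _ le_a; lia.
by have := anti_g _ _ (ltnW lt_a); lia.
Qed.

Lemma sum_threshold_neq (f g : nat -> nat) e K a0 :
  (forall a b, a <= b -> f b <= f a) -> (forall a b, a <= b -> g b <= g a) ->
  1 <= a0 < K -> minn (f a0) e.-1 = minn (g a0) e.-1 -> minn (f a0) e != minn (g a0) e ->
  \sum_(1 <= a < K) (e <= f a : nat) != \sum_(1 <= a < K) (e <= g a : nat).
Proof.
move=> anti_f anti_g range_a0 low ne; have [le_f|lt_f] := leqP e (f a0).
  by rewrite neq_ltn (sum_threshold_lt anti_f anti_g range_a0) ?orbT //; lia.
by rewrite neq_ltn (sum_threshold_lt anti_g anti_f range_a0) //; lia.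
Qed.

Lemma exists_least_truncation_diff u v K : pword u -> pword v -> size u = size v ->
  (forall x, x \in u -> x <= K) -> (forall x, x \in v -> x <= K) -> ~~ perm_eq u v ->
  exists e a0, [/\ 0 < e, forall a, minn (nabove u a) e.-1 = minn (nabove v a) e.-1,
    1 <= a0 < K & minn (nabove u a0) e != minn (nabove v a0) e].
Proof.
move=> pos_u pos_v eq_size bound_u bound_v not_perm.
have nabove_high a : K <= a -> nabove u a = 0 /\ nabove v a = 0.
  by move=> le_Ka; rewrite (nabove_bound bound_u le_Ka) (nabove_bound bound_v le_Ka).
pose G g := [exists a : 'I_K, minn (nabove u a) g != minn (nabove v a) g].
have exG : exists g, G g.
  exists (size u); apply: contraNT not_perm => /existsPn same.
  apply: perm_eq_nabove => // a; have [lt_aK|/nabove_high[-> ->] //] := ltnP a K.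
  have /= := same (Ordinal lt_aK); have := nabove_size u a; have := nabove_size v a; lia.
have [e Ge min_e] := ex_minnP exG; have [a0 ne_a0] := existsP Ge.
exists e, a0; split=> [|a||//].
- by case: e Ge ne_a0 {min_e} => // _; rewrite !minn0.
- have [lt_aK|/nabove_high[-> ->] //] := ltnP a K.
  apply/eqP; apply: contraT => ne.
  have /min_e : G e.-1 by apply/existsP; exists (Ordinal lt_aK).
  by case: e {Ge ne_a0 min_e} ne => //=; lia.
- rewrite ltn_ord andbT lt0n; apply: contraNneq ne_a0 => a0_0.
  by rewrite a0_0 !nabove0 // eq_size.
Qed.

Section Separation.
Variables (u v : seq nat) (K e : nat).
Hypotheses (inc_u : inc_dec_fact u) (inc_v : inc_dec_fact v).
Hypotheses (bound_u : forall x, x \in u -> x <= K) (bound_v : forall x, x \in v -> x <= K).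
Hypothesis eq_size : size u = size v.
Hypothesis eq_sum : \sum_(1 <= a < K) nabove u a = \sum_(1 <= a < K) nabove v a.
Hypothesis e_gt0 : 0 < e.
Hypothesis eq_low : forall a, minn (nabove u a) e.-1 = minn (nabove v a) e.-1.

Local Notation L := (size u + e).
Local Notation P0 := (endpoints (size u) e).

Lemma fit_le_e (P : {set 'I_L.+1}) (s : seq nat) : size s = size u ->
  (forall p, p \in P -> p <= e) -> forall p, p \in P -> p + size s <= L.
Proof. by move=> eq_s le_e p /le_e; rewrite eq_s; lia. Qed.

Lemma weight_sep_eq (P : {set 'I_L.+1}) :
  (forall p, p \in P -> p <= e) -> P != P0 -> weight u P = weight v P.
Proof.
move=> le_e P_ne.
rewrite (weight_layer inc_u (fit_le_e (erefl _) le_e) bound_u).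
rewrite (weight_layer inc_v (fit_le_e (esym eq_size) le_e) bound_v); congr (_ + _).
have [->|P_ne0] := eqVneq P set0; first by rewrite !big1 // => a _; rewrite ncovered0.
have gaps := covers_gaps_sub e_gt0 le_e P_ne0 P_ne.
have le_Me : max_pos P <= e by have [p pP <-] := max_pos_in P_ne0; apply: le_e.
have trunc s a : size s = size u -> ncovered P (nabove s a) =
    ncovered P (minn (nabove s a) e.-1) + (nabove s a - minn (nabove s a) e.-1).
  by move=> eq_s; apply: ncovered_truncate => //; have := nabove_size s a; lia.
rewrite (eq_bigr _ (fun a _ => trunc u a (erefl _))).
rewrite (eq_bigr _ (fun a _ => trunc v a (esym eq_size))) !big_split /=.
have eq_min : \sum_(1 <= a < K) minn (nabove u a) e.-1 =
              \sum_(1 <= a < K) minn (nabove v a) e.-1.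
  by apply: eq_bigr => a _; apply: eq_low.
have eq_cov : \sum_(1 <= a < K) ncovered P (minn (nabove u a) e.-1) =
              \sum_(1 <= a < K) ncovered P (minn (nabove v a) e.-1).
  by apply: eq_bigr => a _; rewrite eq_low.
rewrite !sumnB ?eq_sum ?eq_min ?eq_cov // => a _; exact: geq_minl.
Qed.

Lemma weight_endpoints :
  weight u P0 + \sum_(1 <= a < K) (e <= nabove v a : nat) =
  weight v P0 + \sum_(1 <= a < K) (e <= nabove u a : nat).
Proof.
have le_e := @endpoints_le (size u) e.
rewrite (weight_layer inc_u (fit_le_e (erefl _) le_e) bound_u).
rewrite (weight_layer inc_v (fit_le_e (esym eq_size) le_e) bound_v).
have split_min s a : size s = size u -> ncovered P0 (nabove s a) =
    nabove s a + minn (nabove s a) e.-1 + (e <= nabove s a).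
  by move=> eq_s; have le_s := nabove_size s a; rewrite ncovered_endpoints; lia.
rewrite (eq_bigr _ (fun a _ => split_min u a (erefl _))).
rewrite (eq_bigr _ (fun a _ => split_min v a (esym eq_size))) !big_split /=.
have eq_min : \sum_(1 <= a < K) minn (nabove u a) e.-1 =
              \sum_(1 <= a < K) minn (nabove v a) e.-1.
  by apply: eq_bigr => a _; apply: eq_low.
lia.
Qed.

Lemma not_wilf_equiv_sep :
  \sum_(1 <= a < K) (e <= nabove u a : nat) != \sum_(1 <= a < K) (e <= nabove v a : nat) ->
  ~ wilf_equiv u v.
Proof.
move=> ne_sum W.
have le_e := @endpoints_le (size u) e.
have fit_u := fit_le_e (erefl _) le_e; have fit_v := fit_le_e (esym eq_size) le_e.
have ne_weight : weight u P0 != weight v P0.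
  by apply: contra ne_sum => /eqP eq_w; have := weight_endpoints; rewrite eq_w; lia.
have := W L (minn (weight u P0) (weight v P0)); rewrite !FcoefE.
apply: (card_exists_neq (P0 := P0)) => [|P ne_P]; last first.
  by apply: card_occ_all_eq => // fit; apply: weight_sep_eq => // p /fit; lia.
rewrite !card_occ_all //.
have [lt_w|lt_w|eq_w] := ltngtP (weight u P0) (weight v P0).
- rewrite (card_dom_words0 (r := fun q => maxn 1 (cover_max v P0 q)) lt_w).
  by apply/eqP; rewrite -lt0n; apply: card_dom_words_gt0.
- rewrite (card_dom_words0 (r := fun q => maxn 1 (cover_max u P0 q)) lt_w).
  by apply/eqP; rewrite eq_sym -lt0n; apply: card_dom_words_gt0.
- by rewrite eq_w eqxx in ne_weight.
Qed.

End Separation.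

Lemma wilf_equiv_perm u v : pword u -> pword v -> inc_dec_fact u -> inc_dec_fact v ->
  wilf_equiv u v -> perm_eq u v.
Proof.
move=> pos_u pos_v inc_u inc_v W.
have eq_size := wilf_equiv_size pos_u pos_v W.
have eq_sumn := wilf_equiv_sumn pos_u pos_v eq_size W.
have bound_u := @leq_mem_sumn u.
have bound_v x : x \in v -> x <= sumn u by rewrite eq_sumn; apply: leq_mem_sumn.
have eq_sum : \sum_(1 <= a < sumn u) nabove u a = \sum_(1 <= a < sumn u) nabove v a.
  have := sumn_layer pos_u bound_u; have := sumn_layer pos_v bound_v.
  by rewrite -eq_sumn eq_size; lia.
apply: contraT => not_perm.
have [e [a0 [e_gt0 eq_low range ne_a0]]] :=
  exists_least_truncation_diff pos_u pos_v eq_size bound_u bound_v not_perm.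
have ne_sum := sum_threshold_neq (@nabove_monotone u) (@nabove_monotone v) range
  (eq_low a0) ne_a0.
by case: (not_wilf_equiv_sep inc_u inc_v bound_u bound_v eq_size eq_sum e_gt0 eq_low ne_sum W).
Qed.

Theorem theorem4 (u v : seq nat) :
  pword u -> pword v -> inc_dec_fact u -> inc_dec_fact v ->
  (wilf_equiv u v <-> perm_eq u v).
Proof.
move=> pos_u pos_v inc_u inc_v; split; first exact: wilf_equiv_perm.
exact: perm_wilf_equiv.
Qed.
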